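(* For every $\varepsilon>0$ and $n\in\mathbb{N}$ there exists $N\in\mathbb{N}$ such that every $N$-partitioned hypergraph $H$ with density $d$ has an $n$-partitioned subhypergraph $H_0$ with density at least $d-\varepsilon$ and with the following property: denoting by $I$ the index set of $H_0$, there exist vertices $\gamma_{ik}\in V_{ik}$, $i<k$, $i,k\in I$, such that for every $j\in I$ with $i<j<k$, the degree in the $(i,j,k)$-triad of $H_0$ of each top vertex of that triad is at most the degree of $\gamma_{ik}$ in that triad.
   Context: An $n$-partitioned hypergraph $H$ is a finite $3$-uniform hypergraph whose vertex set is partitioned into nonempty sets $V_{ij}$, $1\le i<j\le n$, such that every edge has, for some $1\le i<j<k\le n$, exactly one vertex in each of $V_{ij}$, $V_{ik}$, $V_{jk}$; the set of such edges is the $(i,j,k)$-triad, and vertices of $V_{ik}$ are its top vertices. The density of a triad is its number of edges divided by $|V_{ij}||V_{ik}||V_{jk}|$, and the density of $H$ is the minimum density of a triad. The degree of $v\in V_{ik}$ in the $(i,j,k)$-triad is the number of edges of the triad containing $v$ divided by $|V_{ij}||V_{jk}|$. For $I\subseteq[n]$, the induced subhypergraph with index set $I$ has parts $V_{ij}$, $i<j$, $i,j\in I$ (indexed by elements of $I$) and all edges of $H$ inside these parts; a subhypergraph is obtained from an induced subhypergraph by deleting some edges, and has the same index set. *)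

From mathcomp Require Import all_boot all_order all_algebra.
From mathcomp Require Import reals.
Set Implicit Arguments. Unset Strict Implicit. Unset Printing Implicit Defensive.
Import Order.TTheory GRing.Theory Num.Theory.
Local Open Scope ring_scope.

(* An N-partitioned hypergraph is given by a finite vertex type V, a labelling
   [part : V -> 'I_N * 'I_N] (v lies in V_{ij} iff part v = (i,j); indices are
   0-based), and an edge set E.  An edge {x,y,z} of the (i,j,k)-triad with
   x in V_ij, y in V_ik (the top vertex), z in V_jk is stored as the ordered
   triple ((x, y), z); this is a bijective encoding of such 3-sets. *)

Definition Vpart (N : nat) (V : finType) (part : V -> 'I_N * 'I_N)
  (i j : 'I_N) : {set V} := [set v | part v == (i, j)].

Definition in_triad (N : nat) (V : finType) (part : V -> 'I_N * 'I_N)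
  (i j k : 'I_N) (e : V * V * V) : bool :=
  [&& part e.1.1 == (i, j), part e.1.2 == (i, k) & part e.2 == (j, k)].

Definition partitioned_hg (N : nat) (V : finType) (part : V -> 'I_N * 'I_N)
  (E : {set V * V * V}) : Prop :=
  [/\ (forall v : V, ((part v).1 < (part v).2)%N),
      (forall i j : 'I_N, (i < j)%N -> exists v : V, part v = (i, j)) &
      (forall e, e \in E -> exists i j k : 'I_N,
          [/\ (i < j)%N, (j < k)%N & in_triad part i j k e])].

Section Dens.
Variables (R : realType) (N : nat) (V : finType) (part : V -> 'I_N * 'I_N).

Definition triad_density (E : {set V * V * V}) (i j k : 'I_N) : R :=
  (#|[set e in E | in_triad part i j k e]|%:R) /
  ((#|Vpart part i j| * #|Vpart part i k| * #|Vpart part j k|)%N%:R).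

Definition triad_degree (E : {set V * V * V}) (i j k : 'I_N) (v : V) : R :=
  (#|[set e in E | in_triad part i j k e && (e.1.2 == v)]|%:R) /
  ((#|Vpart part i j| * #|Vpart part j k|)%N%:R).

Definition hg_density (I : {set 'I_N}) (E : {set V * V * V}) : R :=
  \big[Order.min/1]_(i in I)
    \big[Order.min/1]_(j in I | (i < j)%N)
      \big[Order.min/1]_(k in I | (j < k)%N) triad_density E i j k.

End Dens.

(* Fix m with 1/m <= eps.  In the (i,j,k)-triad call g in V_ik good when cutting
   every top vertex down to the degree of g deletes at most a 1/m fraction of the
   edges; taking a bad vertex of maximal degree shows that at least a 1/m fraction
   of V_ik is good.  Colour a set B of indices by whether one vertex of
   V_(min B, max B) is good for all the triads (min B, j, max B), j in B.  By
   pigeonhole every m u + 2 indices contain a u-set of the first colour, so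
   Ramsey's theorem, applied to all sizes 2 .. n + 1 in turn, gives n indices all
   of whose subsets have it.  For i < k among them the common good vertex is
   gamma_ik: cutting the fibres of the (i,j,k)-triads down to its degree makes it
   of maximal degree and costs at most 1/m <= eps of density. *)

From mathcomp Require Import all_boot all_order all_algebra.
From mathcomp Require Import reals.
From mathcomp Require Import zify lra.
Import Order.TTheory GRing.Theory Num.Theory.
Set Implicit Arguments. Unset Strict Implicit. Unset Printing Implicit Defensive.

Section TruncSet.
Variable T : finType.
Implicit Types (S : {set T}) (c : nat).

Definition trunc_set S c : {set T} := [set x in take c (enum S)].

Lemma trunc_set_sub S c : trunc_set S c \subset S.
Proof. by apply/subsetP=> x; rewrite inE => /mem_take; rewrite mem_enum. Qed.

Lemma card_trunc_set S c : #|trunc_set S c| = minn c #|S|.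
Proof.
rewrite cardsE (card_uniqP _) ?take_uniq ?enum_uniq // size_take -cardE.
by rewrite /minn; case: ltnP.
Qed.

Lemma subset_of_card S c : (c <= #|S|)%N -> exists2 A : {set T}, A \subset S & #|A| = c.
Proof.
by move=> leS; exists (trunc_set S c); rewrite ?trunc_set_sub ?card_trunc_set ?(minn_idPl leS).
Qed.

End TruncSet.

Section Homogeneous.
Variable T : finType.
Implicit Types (P : {set T} -> bool) (X Y : {set T}).

Definition homogeneous P (u : nat) X (c : bool) :=
  forall B : {set T}, B \subset X -> #|B| = u -> P B = c.

Lemma homogeneous_sub P u X Y c :
  Y \subset X -> homogeneous P u X c -> homogeneous P u Y c.
Proof. by move=> YX homX B BY; apply: homX (subset_trans BY YX). Qed.

Lemma homogeneous_set0 P u c : homogeneous P u.+1 set0 c.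
Proof. by move=> B; rewrite subset0 => /eqP ->; rewrite cards0. Qed.

Lemma homogeneous_setU1 P u X x c : x \notin X ->
  homogeneous (fun B => P (x |: B)) u X c -> homogeneous P u.+1 X c ->
  homogeneous P u.+1 (x |: X) c.
Proof.
move=> xX homlink homX B BxX cardB.
have BX : B :\ x \subset X.
  apply/subsetP=> y; rewrite in_setD1 => /andP [yx /(subsetP BxX)].
  by rewrite in_setU1 (negbTE yx).
have [xB | xB] := boolP (x \in B).
  by rewrite -(setD1K xB) homlink //; move: cardB; rewrite (cardsD1 x) xB => -[].
apply: homX cardB; apply/subsetP=> y yB; apply: (subsetP BX).
by rewrite in_setD1 yB andbT; apply: contraNneq xB => <-.
Qed.
End Homogeneous.

Lemma ramsey (u a b : nat) : exists L : nat,
  forall (T : finType) (P : {set T} -> bool) (M : {set T}), (L <= #|M|)%N ->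
  exists (c : bool), exists2 X : {set T}, X \subset M &
    ((if c then a else b) <= #|X|)%N /\ homogeneous P u X c.
Proof.
elim: u a b => [|u IHu] a b.
  exists (maxn a b) => T P M leM; exists (P set0), M => //; split.
    by case: (P set0); lia.
  by move=> B _ /eqP; rewrite cards_eq0 => /eqP ->.
elim: a b => [|a IHa] b.
  by exists 0%N => T P M _; exists true, set0; rewrite ?sub0set //; split=> //; apply: homogeneous_set0.
elim: b => [|b IHb].
  by exists 0%N => T P M _; exists false, set0; rewrite ?sub0set //; split=> //; apply: homogeneous_set0.
have [L1 H1] := IHa b.+1; have [L2 H2] := IHb.
have [L3 H3] := IHu (maxn L1 L2) (maxn L1 L2).
exists L3.+1 => T P M leM.
have [x xM] : exists x, x \in M by apply/set0Pn; rewrite -card_gt0; lia.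
have leMx : (L3 <= #|M :\ x|)%N by move: leM; rewrite (cardsD1 x) xM; lia.
have [c [Y YM [leY homY]]] := H3 T (fun B => P (x |: B)) _ leMx.
(* When [c' = c], the vertex [x] can be added to [X]: hence the bonus [c' == c]. *)
have [c' [X XY [leX homX]]] : exists c', exists2 X : {set T}, X \subset Y &
    ((if c' then a.+1 else b.+1) <= #|X| + (c' == c))%N /\ homogeneous P u.+1 X c'.
  case: c homY leY => homY leY.
    have [c' [X XY [leX homX]]] := H1 T P Y (leq_trans (leq_maxl _ _) leY).
    by exists c', X => //; split=> //; case: c' leX {homX} => /=; lia.
  have [c' [X XY [leX homX]]] := H2 T P Y (leq_trans (leq_maxr _ _) leY).
  by exists c', X => //; split=> //; case: c' leX {homX} => /=; lia.
have XM : X \subset M :\ x := subset_trans XY YM.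
have [Ec | Nc] := eqVneq c' c; last first.
  exists c', X; first exact: subset_trans XM (subD1set M x).
  by rewrite (negbTE Nc) addn0 in leX.
have xX : x \notin X by apply: contraFN (setD11 x M) => /(subsetP XM).
exists c', (x |: X).
  by rewrite subUset sub1set xM (subset_trans XM (subD1set M x)).
split; first by move: leX; rewrite cardsU1 xX Ec eqxx add1n addn1.
by apply: homogeneous_setU1 => //; rewrite Ec; apply: homogeneous_sub XY homY.
Qed.

Lemma ramsey_sizes (n s t : nat) (f : nat -> nat) : exists L : nat,
  forall (T : finType) (P : {set T} -> bool),
  (forall u, (s <= u)%N -> forall X : {set T}, (f u <= #|X|)%N ->
      exists2 B : {set T}, B \subset X & #|B| = u /\ P B) ->
  forall M : {set T}, (L <= #|M|)%N ->
  exists2 X : {set T}, X \subset M & (n <= #|X|)%N /\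
     (forall B : {set T}, B \subset X -> (s <= #|B| < s + t)%N -> P B).
Proof.
elim: t => [|t [L HL]].
  by exists n => T P _ M leM; exists M => //; split=> // B _; lia.
have [L' HL'] := ramsey (s + t) L (f (s + t)).
exists L' => T P hasP M leM.
have [[] [Y YM [leY homY]]] := HL' T P M leM; last first.
  have [B BY [cardB PB]] := hasP (s + t) (leq_addr _ _) Y leY.
  by rewrite homY in PB.
have [X XY [leX PX]] := HL T P hasP Y leY.
exists X; first exact: subset_trans XY YM.
split=> // B BX cardB; have [ltB | geB] := ltnP #|B| (s + t).
  by apply: PX => //; lia.
by apply: homY; [exact: subset_trans BX XY | lia].
Qed.

Lemma sum_card_incidence (I T : finType) (J : {set I}) (W : {set T}) (G : I -> {set T}) :
  (forall j, j \in J -> G j \subset W) ->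
  (\sum_(v in W) #|[set j in J | v \in G j]| = \sum_(j in J) #|G j|)%N.
Proof.
move=> GW; under eq_bigr => v _ do rewrite -sum1dep_card.
rewrite (exchange_big_dep (fun j => j \in J)) /=; last by move=> v j _ /andP [].
apply: eq_bigr => j jJ; rewrite sum1dep_card; apply: eq_card => v.
by rewrite !inE jJ andbC; case: (boolP (v \in G j)) => // /(subsetP (GW j jJ)) ->.
Qed.

Lemma exists_popular (I T : finType) (J : {set I}) (W : {set T}) (G : I -> {set T}) m :
  W != set0 -> (forall j, j \in J -> G j \subset W /\ (#|W| <= m * #|G j|)%N) ->
  exists2 v, v \in W & (#|J| <= m * #|[set j in J | v \in G j]|)%N.
Proof.
move=> /set0Pn [w wW] hG.
have [v vW vmax] := arg_maxnP (fun v => #|[set j in J | v \in G j]|) wW.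
exists v => //; rewrite -(@leq_pmul2r #|W|); last by apply/card_gt0P; exists w.
have lower : (#|J| * #|W| <= m * \sum_(j in J) #|G j|)%N.
  by rewrite -sum_nat_const big_distrr leq_sum // => j /hG [].
have upper : (\sum_(j in J) #|G j| <= #|W| * #|[set j in J | v \in G j]|)%N.
  rewrite -(sum_card_incidence (fun j jJ => (hG j jJ).1)) -sum_nat_const.
  exact: leq_sum.
by apply: (leq_trans lower); rewrite -mulnA [(_ * #|W|)%N]mulnC leq_mul2l upper orbT.
Qed.

Section Triads.
Variables (N : nat) (V : finType) (part : V -> 'I_N * 'I_N).
Implicit Types (E : {set V * V * V}) (i j k : 'I_N) (v g : V) (m : nat).

Lemma in_triad_inj i j k i' j' k' e :
  in_triad part i j k e -> in_triad part i' j' k' e -> [/\ i = i', j = j' & k = k'].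
Proof. by move=> /and3P [/eqP ? /eqP ? _] /and3P [/eqP ? /eqP ? _]; split; congruence. Qed.

Definition fiber E i j k v : {set V * V * V} :=
  [set e in E | in_triad part i j k e && (e.1.2 == v)].

Definition degn E i j k v := #|fiber E i j k v|.

Definition triad_size i j k :=
  (#|Vpart part i j| * #|Vpart part i k| * #|Vpart part j k|)%N.

Lemma degn_le E i j k v : (degn E i j k v <= #|Vpart part i j| * #|Vpart part j k|)%N.
Proof.
pose ends (e : V * V * V) := (e.1.1, e.2).
rewrite /degn -cardsX -(@card_in_imset _ _ ends (fiber E i j k v)).
  apply/subset_leq_card/subsetP => _ /imsetP [e + ->].
  by rewrite !inE => /andP [_ /andP [/and3P [-> _ ->] _]].
move=> [[a b] c] [[a' b'] c']; rewrite !inE /= => /andP [_ /andP [_ /eqP ->]].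
by move=> /andP [_ /andP [_ /eqP ->]] [-> ->].
Qed.

Lemma card_triad E i j k :
  #|[set e in E | in_triad part i j k e]| = (\sum_(v in Vpart part i k) degn E i j k v)%N.
Proof.
rewrite -sum1dep_card (partition_big (fun e => e.1.2) (mem (Vpart part i k))) /=.
  by apply: eq_bigr => v _; rewrite sum1dep_card; apply: eq_card => e; rewrite !inE andbA.
by move=> e /andP [_ /and3P [_ ? _]]; rewrite inE.
Qed.

(* The subtraction is truncated: only vertices of larger degree than [g] count. *)
Definition excess E i j k g :=
  (\sum_(v in Vpart part i k) (degn E i j k v - degn E i j k g))%N.

Definition good m E i j k : {set V} :=
  [set g in Vpart part i k | m * excess E i j k g <= triad_size i j k]%N.

Lemma good_sub m E i j k : good m E i j k \subset Vpart part i k.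
Proof. by apply/subsetP => g; rewrite inE => /andP []. Qed.

Lemma excess_le E i j k g :
  (excess E i j k g <= #|[set v in Vpart part i k | degn E i j k g < degn E i j k v]| *
                       (#|Vpart part i j| * #|Vpart part j k|))%N.
Proof.
rewrite /excess -sum_nat_const !(big_mkcond (fun v => v \in _)) /=.
apply: leq_sum => v _; rewrite inE; case: (v \in Vpart part i k) => //=.
case: ltnP => [_ | le_vg]; last by rewrite leqn0 subn_eq0.
exact: leq_trans (leq_subr _ _) (degn_le _ _ _ _ _).
Qed.

Lemma card_good m E i j k : (0 < m)%N -> (#|Vpart part i k| <= m * #|good m E i j k|)%N.
Proof.
move=> m_gt0.
have [sub | /subsetPn [g0 g0V g0N]] := boolP (Vpart part i k \subset good m E i j k).
  by rewrite (leq_trans (subset_leq_card sub)) // leq_pmull.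
have g0bad : g0 \in Vpart part i k :\: good m E i j k by rewrite inE g0V g0N.
(* A bad vertex of maximal degree: only good vertices have larger degree, so
   only they contribute to its excess. *)
have [g /setDP [gV gN] gmax] := arg_maxnP (degn E i j k) g0bad.
have above_good :
    [set v in Vpart part i k | degn E i j k g < degn E i j k v]%N \subset good m E i j k.
  apply/subsetP => v; rewrite inE => /andP [vV ltv]; apply: contraTT ltv => vN.
  by rewrite -leqNgt; apply: gmax; apply/setDP.
move: gN; rewrite inE gV /= -ltnNge => lt_size.
set q := (#|Vpart part i j| * #|Vpart part j k|)%N.
have : (q * #|Vpart part i k| < q * (m * #|good m E i j k|))%N.
  have -> : (q * #|Vpart part i k| = triad_size i j k)%N by rewrite /triad_size mulnAC.
  apply: (leq_trans lt_size); rewrite mulnCA leq_mul2l; apply/orP; right.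
  by rewrite (leq_trans (excess_le _ _ _ _ _)) // mulnC leq_mul2l subset_leq_card ?orbT.
by rewrite ltn_mul2l => /andP [_ /ltnW].
Qed.

Definition has_common_good m E (B : {set 'I_N}) : bool :=
  [exists i in B, exists k in B, [&& (i < k)%N, [forall b in B, (i <= b <= k)%N] &
     [exists g in Vpart part i k, forall j in B, (i < j < k)%N ==> (g \in good m E i j k)]]].

Lemma has_common_good_setU2 m E i k (C : {set 'I_N}) g :
  (i < k)%N -> g \in Vpart part i k ->
  (forall j, j \in C -> (i < j < k)%N /\ g \in good m E i j k) ->
  has_common_good m E (i |: (k |: C)).
Proof.
move=> ik gV inC; apply/existsP; exists i; rewrite !inE eqxx /=; apply/existsP; exists k.
rewrite !inE eqxx orbT ik /=; apply/andP; split.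
  apply/forallP => b; apply/implyP; rewrite !inE.
  case/or3P => [/eqP -> | /eqP -> | /inC [/andP [? ?] _]].
  - by rewrite leqnn (ltnW ik).
  - by rewrite leqnn (ltnW ik).
  - by apply/andP; split; apply: ltnW.
apply/existsP; exists g; rewrite gV /=; apply/forallP => j; apply/implyP.
rewrite !in_setU1 => /or3P [/eqP -> | /eqP -> | /inC [_ gG]]; apply/implyP => //.
- by rewrite ltnn.
- by rewrite ltnn andbF.
Qed.

Lemma exists_common_good_subset m E u (X : {set 'I_N}) :
  (forall i k, (i < k)%N -> Vpart part i k != set0) -> (0 < m)%N -> (2 <= u)%N ->
  (m * u + 2 <= #|X|)%N ->
  exists2 B : {set 'I_N}, B \subset X & #|B| = u /\ has_common_good m E B.
Proof.
move=> Vne m_gt0 u_ge2 leX.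
have [x0 x0X] : exists x0, x0 \in X by apply/set0Pn; rewrite -card_gt0; lia.
have [i iX imin] : exists2 i : 'I_N, i \in X & forall j, j \in X -> (i <= j)%N.
  by case: (arg_minnP val x0X) => i; exists i.
have [k kX kmax] : exists2 k : 'I_N, k \in X & forall j, j \in X -> (j <= k)%N.
  by case: (arg_maxnP val x0X) => k; exists k.
pose J := X :\ i :\ k.
have between j : j \in J -> (i < j < k)%N.
  rewrite !in_setD1 => /and3P [jk ji jX].
  by have := imin j jX; have := kmax j jX; move: ji jk; rewrite -!val_eqE /=; lia.
have leJ : (m * u <= #|J|)%N.
  rewrite -(leq_add2r 2) (leq_trans leX) // (cardsD1 i X) (cardsD1 k (X :\ i)).
  by rewrite addnA addnC leq_add2l (leq_add (leq_b1 _) (leq_b1 _)).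
have [j0 j0J] : exists j0, j0 \in J.
  by apply/set0Pn; rewrite -card_gt0 (leq_trans _ leJ) // muln_gt0 m_gt0 (ltnW u_ge2).
have ik : (i < k)%N by have := between j0 j0J; lia.
have [v vV leJv] := @exists_popular _ _ J _ (fun j => good m E i j k) m (Vne i k ik)
  (fun j _ => conj (good_sub m E i j k) (card_good E i j k m_gt0)).
have [C CJ cardC] : exists2 C : {set 'I_N},
    C \subset [set j in J | v \in good m E i j k] & #|C| = (u - 2)%N.
  apply: subset_of_card; rewrite -(leq_pmul2l m_gt0) (leq_trans _ leJv) //.
  by rewrite (leq_trans _ leJ) // leq_mul2l leq_subr orbT.
have inC j : j \in C -> (i < j < k)%N /\ v \in good m E i j k.
  by move=> /(subsetP CJ); rewrite inE => /andP [/between ? ?].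
exists (i |: (k |: C)).
  rewrite !subUset !sub1set iX kX; apply/subsetP => j /(subsetP CJ).
  by rewrite !inE => /andP [/and3P [_ _ ->]].
split.
  have kC : k \notin C by apply/negP => /inC [/andP [_]]; rewrite ltnn.
  have iC : i \notin k |: C.
    rewrite in_setU1 negb_or; apply/andP; split; first by rewrite neq_ltn ik.
    by apply/negP => /inC [/andP []]; rewrite ltnn.
  by rewrite cardsU1 iC cardsU1 kC cardC; lia.
exact: (has_common_good_setU2 ik vV inC).
Qed.

End Triads.

Section Trim.
Variables (N : nat) (V : finType) (part : V -> 'I_N * 'I_N) (E : {set V * V * V}).
Variables (A : {set 'I_N}) (cap : 'I_N -> 'I_N -> 'I_N -> nat).

Definition trim : {set V * V * V} :=
  [set e in E | [exists i in A, exists j in A, exists k in A,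
     [&& (i < j)%N, (j < k)%N, in_triad part i j k e &
         e \in trunc_set (fiber part E i j k e.1.2) (cap i j k)]]].

Lemma trim_sub : trim \subset E.
Proof. by apply/subsetP => e; rewrite inE => /andP []. Qed.

Lemma trim_triad e : e \in trim -> exists i j k : 'I_N,
  [/\ [&& i \in A, j \in A & k \in A], (i < j)%N, (j < k)%N & in_triad part i j k e].
Proof.
rewrite inE => /andP [_ /existsP [i /andP [iA /existsP [j /andP [jA /existsP [k]]]]]].
by case/andP => kA /and4P [ij jk ijk _]; exists i, j, k; rewrite iA jA kA.
Qed.

Lemma fiber_trim i j k v : [&& i \in A, j \in A & k \in A] -> (i < j)%N -> (j < k)%N ->
  fiber part trim i j k v = trunc_set (fiber part E i j k v) (cap i j k).
Proof.
move=> /and3P [iA jA kA] ij jk; apply/setP => e; rewrite inE.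
apply/andP/idP => [[] | eT].
  rewrite inE => /andP [_ /existsP [i' /andP [_ /existsP [j' /andP [_ /existsP [k']]]]]].
  case/andP => _ /and4P [_ _ ijk' eT] /andP [ijk /eqP ev].
  by case: (in_triad_inj ijk ijk') eT => <- <- <-; rewrite ev.
have /setIdP [eE /andP [ijk /eqP ev]] := subsetP (trunc_set_sub _ _) e eT.
rewrite ijk ev eqxx inE eE; split=> //; apply/existsP; exists i; rewrite iA.
by apply/existsP; exists j; rewrite jA; apply/existsP; exists k; rewrite kA ij jk ijk ev eT.
Qed.

Lemma degn_trim i j k v : [&& i \in A, j \in A & k \in A] -> (i < j)%N -> (j < k)%N ->
  degn part trim i j k v = minn (cap i j k) (degn part E i j k v).
Proof. by move=> ijkA ij jk; rewrite /degn fiber_trim // card_trunc_set. Qed.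

End Trim.

Section Densities.
Variables (R : realType) (N : nat) (V : finType) (part : V -> 'I_N * 'I_N).
Implicit Types (E : {set V * V * V}) (i j k : 'I_N) (v g : V).
Local Open Scope ring_scope.

Lemma triad_densityE E i j k : triad_density R part E i j k =
  (\sum_(v in Vpart part i k) degn part E i j k v)%N%:R / (triad_size part i j k)%:R.
Proof. by rewrite /triad_density card_triad. Qed.

Lemma triad_degreeE E i j k v : triad_degree R part E i j k v =
  (degn part E i j k v)%:R / (#|Vpart part i j| * #|Vpart part j k|)%N%:R.
Proof. by []. Qed.

Lemma hg_density_le_triad E i j k : (i < j)%N -> (j < k)%N ->
  hg_density R part [set: 'I_N] E <= triad_density R part E i j k.
Proof.
move=> ij jk; apply: (bigmin_inf i); first by rewrite inE.
apply: (bigmin_inf j); first by rewrite inE ij.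
by apply: (bigmin_inf k); rewrite ?inE ?jk.
Qed.

Lemma excess_ratio_le m E i j k g : (0 < m)%N -> g \in good part m E i j k ->
  (excess part E i j k g)%:R / (triad_size part i j k)%:R <= m%:R^-1 :> R.
Proof.
move=> m_gt0; rewrite inE => /andP [_ le_size].
have [-> | size_gt0] := posnP (triad_size part i j k).
  by rewrite invr0 mulr0 invr_ge0 ler0n.
by rewrite ler_pdivrMr ?ltr0n // ler_pdivlMl ?ltr0n // -natrM ler_nat.
Qed.

Section Trimmed.
Variables (E : {set V * V * V}) (A : {set 'I_N}) (cap : 'I_N -> 'I_N -> 'I_N -> nat).
Variables (i j k : 'I_N) (g : V).
Hypotheses (ijkA : [&& i \in A, j \in A & k \in A]) (ij : (i < j)%N) (jk : (j < k)%N).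
Hypothesis cap_pivot : cap i j k = degn part E i j k g.

Lemma triad_density_trim : triad_density R part (trim part E A cap) i j k =
  triad_density R part E i j k - (excess part E i j k g)%:R / (triad_size part i j k)%:R.
Proof.
rewrite !triad_densityE; set T := trim _ _ _ _.
have -> : (\sum_(v in Vpart part i k) degn part E i j k v =
    \sum_(v in Vpart part i k) degn part T i j k v + excess part E i j k g)%N.
  rewrite /excess -big_split; apply: eq_bigr => v _.
  rewrite degn_trim // cap_pivot; case: leqP => [le_gv | /ltnW le_vg].
    by rewrite /= subnKC.
  by rewrite /= (eqP le_vg) addn0.
by rewrite natrD mulrDl addrK.
Qed.

Lemma triad_degree_trim_le v : triad_degree R part (trim part E A cap) i j k v <=
  triad_degree R part (trim part E A cap) i j k g.
Proof.
rewrite !triad_degreeE !degn_trim // cap_pivot minnn.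
by rewrite ler_wpM2r ?invr_ge0 ?ler0n // ler_nat geq_minl.
Qed.

End Trimmed.
End Densities.

Section Pivot.
Variables (R : realType) (N : nat) (V : finType) (part : V -> 'I_N * 'I_N) (E : {set V * V * V}).
Variables (m : nat) (A : {set 'I_N}).
Hypothesis homA : forall B : {set 'I_N}, B \subset A -> (2 <= #|B|)%N -> has_common_good part m E B.

Definition pivot (i k : 'I_N) : option V :=
  [pick g in Vpart part i k | [forall j in A, (i < j < k)%N ==> (g \in good part m E i j k)]].

Definition pivot_cap (i j k : 'I_N) : nat :=
  if pivot i k is Some g then degn part E i j k g else 0.

Lemma pivotP i k : i \in A -> k \in A -> (i < k)%N -> exists g, [/\ pivot i k = Some g,
  part g = (i, k) & forall j, j \in A -> (i < j < k)%N -> g \in good part m E i j k].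
Proof.
move=> iA kA ik; pose B := [set b in A | i <= b <= k]%N.
have iB : i \in B by rewrite inE iA leqnn ltnW.
have kB : k \in B by rewrite inE kA leqnn ltnW.
have BA : B \subset A by apply/subsetP => b; rewrite inE => /andP [].
have B2 : (2 <= #|B|)%N.
  have <- : #|[set i; k]| = 2 by rewrite cards2 neq_ltn ik.
  by rewrite subset_leq_card // subUset !sub1set iB kB.
case/existsP: (homA BA B2) => i' /andP [i'B /existsP [k' /andP [k'B]]].
case/and3P => _ /forallP ends /existsP [g /andP [gV gG]].
have [ei ek] : i' = i /\ k' = k.
  move: (ends i) (ends k) i'B k'B; rewrite iB kB !inE /=.
  by move=> /andP [? ?] /andP [? ?] /and3P [_ ? ?] /and3P [_ ? ?]; split; apply: ord_inj; lia.
subst i' k'.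
have gP : [forall j in A, (i < j < k)%N ==> (g \in good part m E i j k)].
  apply/forallP => j; apply/implyP => jA; apply/implyP => ijk.
  have jB : j \in B by rewrite inE jA; case/andP: ijk => /ltnW -> /ltnW ->.
  by have := forallP gG j; rewrite jB ijk.
rewrite /pivot; case: pickP => [g' /andP [g'V /forallP g'G] | none]; last first.
  by have := none g; rewrite gV gP.
exists g'; split=> // [| j jA ijk]; first by move: g'V; rewrite inE => /eqP.
by have := g'G j; rewrite jA ijk.
Qed.

Definition pivot_trim : {set V * V * V} := trim part E A pivot_cap.

Lemma triad_density_pivot_trim i j k : (0 < m)%N ->
  i \in A -> j \in A -> k \in A -> (i < j)%N -> (j < k)%N ->
  (triad_density R part E i j k - m%:R^-1 <= triad_density R part pivot_trim i j k)%R.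
Proof.
move=> m_gt0 iA jA kA ij jk; have [g [pg _ gG]] := pivotP iA kA (ltn_trans ij jk).
have capg : pivot_cap i j k = degn part E i j k g by rewrite /pivot_cap pg.
rewrite (triad_density_trim R _ ij jk capg) ?iA ?jA ?kA // lerD2l lerN2.
by apply: excess_ratio_le m_gt0 (gG j jA _); rewrite ij jk.
Qed.

Lemma pivot_trim_max_degree i k : i \in A -> k \in A -> (i < k)%N ->
  exists gamma, part gamma = (i, k) /\ forall j, j \in A -> (i < j)%N -> (j < k)%N ->
    forall v, (triad_degree R part pivot_trim i j k v <=
               triad_degree R part pivot_trim i j k gamma)%R.
Proof.
move=> iA kA ik; have [g [pg pgik _]] := pivotP iA kA ik.
exists g; split=> // j jA ij jk v.
have capg : pivot_cap i j k = degn part E i j k g by rewrite /pivot_cap pg.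
by apply: (triad_degree_trim_le R _ ij jk capg); rewrite iA jA kA.
Qed.

End Pivot.

Local Open Scope ring_scope.

Lemma exists_inv_nat_le (R : archiFieldType) (eps : R) :
  0 < eps -> exists2 m : nat, (0 < m)%N & m%:R^-1 <= eps.
Proof.
move=> eps_gt0; have inv_ge0 : 0 <= eps^-1 by rewrite invr_ge0 ltW.
have lt_inv := archi_boundP inv_ge0; set m := Num.Def.archi_bound _ in lt_inv.
have m_gt0 : (0 < m)%N by rewrite -(ltr0n R) (le_lt_trans inv_ge0 lt_inv).
exists m => //; rewrite -[eps]invrK lef_pV2 ?posrE ?ltr0n ?invr_gt0 ?ltW //.
Qed.

Unset Implicit Arguments.

Theorem lemma5p1 (R : realType) (eps : R) (heps : 0 < eps) (n : nat) :
  exists N : nat,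
    forall (V : finType) (part : V -> 'I_N * 'I_N) (E : {set V * V * V}),
      partitioned_hg part E ->
      exists (I : {set 'I_N}) (E0 : {set V * V * V}),
        [/\ #|I| = n,
            E0 \subset E,
            (forall e, e \in E0 -> exists i j k : 'I_N,
                [/\ [&& i \in I, j \in I & k \in I],
                    (i < j)%N, (j < k)%N & in_triad part i j k e]),
            hg_density R part I E0 >= hg_density R part [set: 'I_N] E - eps &
            (forall i k : 'I_N, i \in I -> k \in I -> (i < k)%N ->
               exists gamma : V,
                 part gamma = (i, k) /\
                 (forall j : 'I_N, j \in I -> (i < j)%N -> (j < k)%N ->
                    forall v : V, part v = (i, k) ->
                      triad_degree R part E0 i j k v
                        <= triad_degree R part E0 i j k gamma))].
Proof.
have [m m_gt0 m_eps] := exists_inv_nat_le heps.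
have [L HL] := ramsey_sizes n 2 n (fun u => m * u + 2)%N.
exists L => V part E [_ Vne _].
have Vne' (i k : 'I_L) : (i < k)%N -> Vpart part i k != set0.
  by case/Vne => v pv; apply/set0Pn; exists v; rewrite inE pv.
have leLT : (L <= #|[set: 'I_L]|)%N by rewrite cardsT card_ord.
have [X _ [leX homX]] := HL _ (has_common_good part m E)
  (fun u u2 Y => exists_common_good_subset E Vne' m_gt0 u2) setT leLT.
have [A AX cardA] := subset_of_card leX.
have homA (B : {set 'I_L}) : B \subset A -> (2 <= #|B|)%N -> has_common_good part m E B.
  move=> BA B2; apply: homX (subset_trans BA AX) _.
  by rewrite B2 /= -cardA (leq_ltn_trans (subset_leq_card BA)) // ltn_addl.
exists A, (pivot_trim part E m A); split=> //.
- exact: trim_sub.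
- exact: trim_triad.
- have d_le1 : hg_density R part [set: 'I_L] E <= 1 := bigmin_le_id _ _ _ _.
  apply: le_bigmin => [|i iA]; first lra.
  apply: le_bigmin => [|j /andP [jA ij]]; first lra.
  apply: le_bigmin => [|k /andP [kA jk]]; first lra.
  have := triad_density_pivot_trim R homA m_gt0 iA jA kA ij jk.
  have := hg_density_le_triad R part E ij jk.
  lra.
- move=> i k iA kA ik; have [g [pg gmax]] := pivot_trim_max_degree R homA iA kA ik.
  by exists g; split=> // j jA ij jk v _; apply: gmax.
Qed.
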